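(* Let $K\ge2$, $t\in(0,1)$, $\xi(s)=(1+s)^K-1$, and let either $\xi_0(s)=t\xi(s)$ or $\xi_0(s)=\xi(ts)$. Then $\xi_0''(s)<\xi''(|s|)$ for all $s\in[-1,1]\setminus\{0\}$, and the functions $$\zeta_+(s)=\frac{\xi''(s)}{\xi''(s)+\xi_0''(s)},\qquad \zeta_-(s)=\frac{\xi''(s)}{\xi''(s)+\xi_0''(-s)}$$ are nondecreasing on $(0,1]$. *)

From Stdlib Require Import Reals.
From Coquelicot Require Import Coquelicot.
Open Scope R_scope.

Definition xi (K : nat) (s : R) : R := (1 + s) ^ K - 1.

Definition deriv2 (f : R -> R) (s : R) : R := Derive_n f 2 s.

Definition zeta_plus (K : nat) (xi0 : R -> R) (s : R) : R :=
  deriv2 (xi K) s / (deriv2 (xi K) s + deriv2 xi0 s).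

Definition zeta_minus (K : nat) (xi0 : R -> R) (s : R) : R :=
  deriv2 (xi K) s / (deriv2 (xi K) s + deriv2 xi0 (- s)).

(** Since [xi''(s) = K (K-1) (1+s)^(K-2)], both choices of [xi0] are dilations
    [xi0''(s) = q xi''(b s)] with [0 < q < 1] and [0 < b <= 1].  The first claim
    then follows from [1 + b s <= 1 + |s|], and
    [zeta_(+/-)(s) = 1 / (1 + q ((1 +/- b s) / (1 + s))^(K-2))] is nondecreasing
    because [(1 + beta s) / (1 + s)] is nonincreasing for [s >= 0] when [beta <= 1]. *)
From Stdlib Require Import Reals Lra Lia.
From Coquelicot Require Import Coquelicot.
Open Scope R_scope.

Lemma ex_derive_n_xi (K k : nat) (s : R) : ex_derive_n (xi K) k s.
Proof.
  unfold xi; apply ex_derive_n_minus; apply filter_forall; intros u j _.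
  - apply (ex_derive_n_ext (fun y => (y + 1) ^ K)); [intro y; f_equal; ring|].
    apply (ex_derive_n_comp_trans (fun y => y ^ K)), ex_derive_n_pow.
  - apply ex_derive_n_const.
Qed.

Lemma is_derive_xi (K : nat) (s : R) :
  is_derive (xi K) s (INR K * (1 + s) ^ pred K).
Proof. unfold xi; auto_derive; [trivial | ring]. Qed.

Lemma deriv2_xi (m : nat) (s : R) :
  deriv2 (xi (S (S m))) s = INR (S (S m)) * INR (S m) * (1 + s) ^ m.
Proof.
  change (Derive (Derive (xi (S (S m)))) s = INR (S (S m)) * INR (S m) * (1 + s) ^ m).
  rewrite (Derive_ext _ (fun u => INR (S (S m)) * (1 + u) ^ S m))
    by (intro u; apply is_derive_unique, is_derive_xi).
  apply is_derive_unique; auto_derive; [trivial | simpl; ring].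
Qed.

Lemma deriv2_xi0_dilation (K : nat) (t : R) (xi0 : R -> R) :
  0 < t < 1 ->
  (xi0 = (fun s => t * xi K s) \/ xi0 = (fun s => xi K (t * s))) ->
  exists q b, 0 < q < 1 /\ 0 < b <= 1 /\
    forall s, deriv2 xi0 s = q * deriv2 (xi K) (b * s).
Proof.
  intros Ht [-> | ->].
  - exists t, 1; split; [lra | split; [lra |]]; intro s.
    unfold deriv2; rewrite Derive_n_scal_l, Rmult_1_l; reflexivity.
  - exists (t ^ 2), t; split; [split; nra | split; [lra |]]; intro s.
    unfold deriv2; apply Derive_n_comp_scal, filter_forall.
    intros u k _; apply ex_derive_n_xi.
Qed.

Lemma pow_dilate_le_abs (m : nat) (b s : R) :
  0 <= b <= 1 -> -1 <= s <= 1 -> (1 + b * s) ^ m <= (1 + Rabs s) ^ m.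
Proof.
  intros Hb Hs; apply pow_incr.
  unfold Rabs; destruct (Rcase_abs s); split; nra.
Qed.

Lemma profile_dilate_lt_abs (m : nat) (c q b s : R) :
  0 < c -> 0 <= q < 1 -> 0 <= b <= 1 -> -1 <= s <= 1 ->
  q * (c * (1 + b * s) ^ m) < c * (1 + Rabs s) ^ m.
Proof.
  intros Hc Hq Hb Hs.
  assert (Habs : 0 < c * (1 + Rabs s) ^ m)
    by (apply Rmult_lt_0_compat, pow_lt; [| pose proof (Rabs_pos s)]; lra).
  apply Rle_lt_trans with (q * (c * (1 + Rabs s) ^ m)); [| nra].
  apply Rmult_le_compat_l, Rmult_le_compat_l, pow_dilate_le_abs; lra.
Qed.

Lemma pow_ratio_antitone (m : nat) (beta x y : R) :
  -1 <= beta <= 1 -> 0 <= x -> x <= y -> y <= 1 ->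
  (1 + x) ^ m * (1 + beta * y) ^ m <= (1 + y) ^ m * (1 + beta * x) ^ m.
Proof.
  intros Hbeta Hx Hxy Hy; rewrite <- !Rpow_mult_distr.
  assert (0 <= 1 + beta * y) by nra.
  apply pow_incr; split; [apply Rmult_le_pos; lra |].
  assert (0 <= (1 - beta) * (y - x)) by (apply Rmult_le_pos; lra).
  nra.
Qed.

Lemma Rdiv_add_le (u1 v1 u2 v2 : R) :
  0 < u1 -> 0 <= v1 -> 0 < u2 -> 0 <= v2 -> u1 * v2 <= u2 * v1 ->
  u1 / (u1 + v1) <= u2 / (u2 + v2).
Proof.
  intros Hu1 Hv1 Hu2 Hv2 Hcross.
  apply Rmult_le_reg_r with ((u1 + v1) * (u2 + v2)); [nra|].
  replace (u1 / (u1 + v1) * ((u1 + v1) * (u2 + v2))) with (u1 * (u2 + v2))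
    by (field; lra).
  replace (u2 / (u2 + v2) * ((u1 + v1) * (u2 + v2))) with (u2 * (u1 + v1))
    by (field; lra).
  nra.
Qed.

Lemma profile_ratio_monotone (m : nat) (c q beta x y : R) :
  0 < c -> 0 <= q -> -1 <= beta <= 1 -> 0 < x -> x <= y -> y <= 1 ->
  c * (1 + x) ^ m / (c * (1 + x) ^ m + q * (c * (1 + beta * x) ^ m)) <=
  c * (1 + y) ^ m / (c * (1 + y) ^ m + q * (c * (1 + beta * y) ^ m)).
Proof.
  intros Hc Hq Hbeta Hx Hxy Hy.
  assert (Hpos : forall s, 0 <= s <= 1 -> 0 < c * (1 + s) ^ m)
    by (intros s Hs; apply Rmult_lt_0_compat; [| apply pow_lt]; lra).
  assert (Hnneg : forall s, 0 <= s <= 1 -> 0 <= q * (c * (1 + beta * s) ^ m))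
    by (intros s Hs; apply Rmult_le_pos, Rmult_le_pos, pow_le; nra).
  pose proof (pow_ratio_antitone m beta x y Hbeta (Rlt_le _ _ Hx) Hxy Hy).
  apply Rdiv_add_le; try apply Hpos; try apply Hnneg; try lra.
  assert (0 <= q * c * c) by (apply Rmult_le_pos; nra).
  replace (c * (1 + x) ^ m * (q * (c * (1 + beta * y) ^ m)))
    with (q * c * c * ((1 + x) ^ m * (1 + beta * y) ^ m)) by ring.
  replace (c * (1 + y) ^ m * (q * (c * (1 + beta * x) ^ m)))
    with (q * c * c * ((1 + y) ^ m * (1 + beta * x) ^ m)) by ring.
  apply Rmult_le_compat_l; assumption.
Qed.

Theorem lemma2 (K : nat) (t : R) (xi0 : R -> R) :
  (2 <= K)%nat -> 0 < t < 1 ->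
  (xi0 = (fun s => t * xi K s) \/ xi0 = (fun s => xi K (t * s))) ->
  (forall s, -1 <= s <= 1 -> s <> 0 -> deriv2 xi0 s < deriv2 (xi K) (Rabs s)) /\
  (forall x y, 0 < x -> x <= y -> y <= 1 ->
     zeta_plus K xi0 x <= zeta_plus K xi0 y) /\
  (forall x y, 0 < x -> x <= y -> y <= 1 ->
     zeta_minus K xi0 x <= zeta_minus K xi0 y).
Proof.
  intros HK Ht Hxi0.
  destruct (deriv2_xi0_dilation K t xi0 Ht Hxi0) as (q & b & Hq & Hb & Hdil).
  destruct K as [|[|m]]; [lia | lia |].
  assert (Hc : 0 < INR (S (S m)) * INR (S m))
    by (apply Rmult_lt_0_compat; apply lt_0_INR; lia).
  split; [|split].
  - (* the strict inequality comes from q < 1 *)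
    intros s Hs _; rewrite Hdil, !deriv2_xi.
    apply profile_dilate_lt_abs; lra.
  - intros x y Hx Hxy Hy; unfold zeta_plus; rewrite !Hdil, !deriv2_xi.
    apply profile_ratio_monotone; lra.
  - intros x y Hx Hxy Hy; unfold zeta_minus; rewrite !Hdil, !deriv2_xi.
    rewrite <- !Ropp_mult_distr_r, !Ropp_mult_distr_l.
    apply profile_ratio_monotone; lra.
Qed.
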